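(* For every integer $n>1$ there is a set $S$ of $n$ points in the plane $\mathbb{R}^2$ in convex position such that every Steiner tree $T$ on $S$ has dilation (with respect to $S$) at least $\frac{1}{\sin(\pi/n)}$, and $\frac{1}{\sin(\pi/n)} > \frac{n}{\pi}$.
   Context: A set of points is in convex position if all of them lie on the boundary of their convex hull. A Steiner tree on a finite set $S\subset\mathbb{R}^2$ is a tree $T$ whose vertex set is a finite subset of $\mathbb{R}^2$ containing $S$ (vertices not in $S$ are Steiner points; their number and positions are arbitrary). Each edge $(u,v)$ is realized as the straight segment $uv$ and has weight equal to the Euclidean distance $d(u,v)$; edges may cross or overlap. $d_T(u,v)$ denotes the length of the (unique) path in $T$ between $u$ and $v$. The dilation of $T$ with respect to $S$ is $\max_{u,v\in S,\,u\neq v} d_T(u,v)/d(u,v)$. *)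

From Stdlib Require Import Reals List.
Import ListNotations.
Open Scope R_scope.

Definition point : Type := (R * R)%type.

Definition dist (p q : point) : R :=
  sqrt ((fst p - fst q) ^ 2 + (snd p - snd q) ^ 2).

Fixpoint sum_list (l : list R) : R :=
  match l with [] => 0 | x :: l' => x + sum_list l' end.

Fixpoint wsum (ws : list R) (S : list point) : point :=
  match ws, S with
  | w :: ws', p :: S' =>
      let r := wsum ws' S' in (w * fst p + fst r, w * snd p + snd r)
  | _, _ => (0, 0)
  end.

Definition in_hull (S : list point) (p : point) : Prop :=
  exists ws : list R,
    length ws = length S /\ Forall (fun w => 0 <= w) ws /\
    sum_list ws = 1 /\ p = wsum ws S.

Definition in_hull_interior (S : list point) (p : point) : Prop :=
  exists eps : R, 0 < eps /\ forall q : point, dist p q < eps -> in_hull S q.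

Definition on_hull_boundary (S : list point) (p : point) : Prop :=
  in_hull S p /\ ~ in_hull_interior S p.

Definition convex_position (S : list point) : Prop :=
  forall p, In p S -> on_hull_boundary S p.

(* Geometric graph: vertex list V, edge list E (unordered pairs). *)
Definition adj (E : list (point * point)) (u v : point) : Prop :=
  In (u, v) E \/ In (v, u) E.

Fixpoint walk_ok (E : list (point * point)) (p : list point) : Prop :=
  match p with
  | x :: ((y :: _) as rest) => adj E x y /\ walk_ok E rest
  | _ => True
  end.

Definition simple_path (E : list (point * point)) (u v : point)
  (p : list point) : Prop :=
  NoDup p /\ walk_ok E p /\ head p = Some u /\ last p u = v /\ p <> [].

Fixpoint path_length (p : list point) : R :=
  match p with
  | x :: ((y :: _) as rest) => dist x y + path_length rest
  | _ => 0
  end.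

Definition well_formed_graph (V : list point) (E : list (point * point)) : Prop :=
  NoDup V /\
  forall e, In e E -> In (fst e) V /\ In (snd e) V /\ fst e <> snd e.

Definition connected (V : list point) (E : list (point * point)) : Prop :=
  forall u v, In u V -> In v V -> exists p, simple_path E u v p.

Definition has_cycle (E : list (point * point)) : Prop :=
  exists c : list point, (3 <= length c)%nat /\ NoDup c /\ walk_ok E c /\
    exists x y, head c = Some x /\ last c x = y /\ adj E y x.

Definition is_tree (V : list point) (E : list (point * point)) : Prop :=
  well_formed_graph V E /\ V <> [] /\ connected V E /\ ~ has_cycle E.

Definition steiner_tree (S V : list point) (E : list (point * point)) : Prop :=
  is_tree V E /\ incl S V.

(* Dilation of T = (V,E) w.r.t. S is at least c: some pair u <> v in S
   has d_T(u,v)/d(u,v) >= c, d_T being the length of the (unique) tree path. *)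
Definition dilation_at_least (S : list point) (E : list (point * point)) (c : R)
  : Prop :=
  exists u v, In u S /\ In v S /\ u <> v /\
    exists p, simple_path E u v p /\ path_length p / dist u v >= c.

(* Take the regular n-gon inscribed in the unit circle, whose consecutive vertices
   are at distance 2 sin(pi/n).  If a Steiner tree had smaller dilation, the tree path
   between consecutive vertices v_k, v_(k+1) would have length < 2, and since
   |x - v| >= 1 - <x, v> for unit v it would stay in the open half-plane
   {x | 0 < <x, v_k + v_(k+1)>}.  Now count the signed crossings of the positive
   x-axis along edges.  This is antisymmetric, so it sums to 0 along every closed
   walk of an acyclic graph.  Along the closed walk formed by the n tree paths it
   telescopes inside each half-plane, and only the last path crosses the positive
   x-axis: the sum is 1.  Finally sin x < x gives 1 / sin(pi/n) > n/pi. *)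

From Pilot Require Import Defs.
From Stdlib Require Import Reals List.
Open Scope R_scope.
From Stdlib Require Import Lra Lia Classical ListDec Rgeom.
Import ListNotations.

Definition dot (a b : point) : R := fst a * fst b + snd a * snd b.

Definition vadd (a b : point) : point := (fst a + fst b, snd a + snd b).

Lemma dist_euc_eq p q : Defs.dist p q = dist_euc (fst p) (snd p) (fst q) (snd q).
Proof. unfold Defs.dist, dist_euc, Rsqr. f_equal. ring. Qed.

Lemma dist_comm p q : Defs.dist p q = Defs.dist q p.
Proof. rewrite !dist_euc_eq. apply distance_symm. Qed.

Lemma dist_diag p : Defs.dist p p = 0.
Proof. rewrite dist_euc_eq. apply distance_refl. Qed.

Lemma dist_triangle p q r : Defs.dist p r <= Defs.dist p q + Defs.dist q r.
Proof. rewrite !dist_euc_eq. apply triangle. Qed.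

Lemma one_sub_dot_le_dist x p : dot p p = 1 -> 1 - dot x p <= Defs.dist x p.
Proof.
  intros Hp. unfold Defs.dist.
  destruct (Rle_or_lt (1 - dot x p) 0) as [Hle | Hpos].
  { pose proof (sqrt_pos ((fst x - fst p) ^ 2 + (snd x - snd p) ^ 2)). lra. }
  rewrite <- (sqrt_pow2 (1 - dot x p)) by lra.
  apply sqrt_le_1_alt.
  assert (Lagrange : ((fst x - fst p) ^ 2 + (snd x - snd p) ^ 2) * dot p p
    = (dot p p - dot x p) ^ 2 + ((fst x - fst p) * snd p - (snd x - snd p) * fst p) ^ 2)
    by (unfold dot; ring).
  rewrite Hp, Rmult_1_r in Lagrange. rewrite Lagrange.
  pose proof (pow2_ge_0 ((fst x - fst p) * snd p - (snd x - snd p) * fst p)). lra.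
Qed.

(** * Walks and antisymmetric edge sums *)

Fixpoint walk_sum (f : point -> point -> R) (w : list point) : R :=
  match w with
  | x :: ((y :: _) as rest) => f x y + walk_sum f rest
  | _ => 0
  end.

Definition walk (E : list (point * point)) (u v : point) (m : list point) : Prop :=
  walk_ok E (u :: m) /\ last m u = v.

Lemma last_cons_default (y d : point) m : last (y :: m) d = last m y.
Proof.
  revert y d. induction m as [|z m IH]; intros y d; [reflexivity|].
  change (last (z :: m) d = last (z :: m) y). now rewrite !IH.
Qed.

Lemma last_app_cons (d y : point) l1 l2 : last (l1 ++ y :: l2) d = last l2 y.
Proof.
  revert d. induction l1 as [|x l1 IH]; intros d; simpl app.
  - apply last_cons_default.
  - now rewrite last_cons_default, IH.
Qed.

Lemma walk_ok_app E l1 y l2 :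
  walk_ok E (l1 ++ y :: l2) <-> walk_ok E (l1 ++ [y]) /\ walk_ok E (y :: l2).
Proof.
  induction l1 as [|a [|b l1] IH]; simpl in *; [tauto | tauto |].
  rewrite IH. tauto.
Qed.

Lemma walk_sum_app f l1 y l2 :
  walk_sum f (l1 ++ y :: l2) = walk_sum f (l1 ++ [y]) + walk_sum f (y :: l2).
Proof.
  induction l1 as [|a [|b l1] IH]; simpl in *; [lra | lra |].
  rewrite IH. lra.
Qed.

Lemma walk_ok_cut_loop E P a B Q :
  walk_ok E (P ++ a :: B ++ a :: Q) -> walk_ok E (P ++ a :: Q) /\ walk_ok E (a :: B ++ [a]).
Proof.
  rewrite (walk_ok_app E P a (B ++ a :: Q)), (walk_ok_app E P a Q).
  change (a :: B ++ a :: Q) with ((a :: B) ++ a :: Q).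
  rewrite (walk_ok_app E (a :: B) a Q). tauto.
Qed.

Lemma walk_sum_cut_loop f P a B Q :
  walk_sum f (P ++ a :: B ++ a :: Q) = walk_sum f (P ++ a :: Q) + walk_sum f (a :: B ++ [a]).
Proof.
  rewrite (walk_sum_app f P a (B ++ a :: Q)), (walk_sum_app f P a Q).
  change (a :: B ++ a :: Q) with ((a :: B) ++ a :: Q).
  rewrite (walk_sum_app f (a :: B) a Q). simpl. lra.
Qed.

Lemma simple_path_walk E u v p : simple_path E u v p -> exists m, p = u :: m /\ walk E u v m.
Proof.
  intros (_ & Hw & Hhead & Hlast & _).
  destruct p as [|x m]; [discriminate|]. injection Hhead as ->.
  exists m. split; [reflexivity|]. split; [exact Hw|].
  now rewrite last_cons_default in Hlast.
Qed.

Lemma walk_cat f E u v z m1 m2 : walk E u v m1 -> walk E v z m2 ->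
  walk E u z (m1 ++ m2) /\
  walk_sum f (u :: m1 ++ m2) = walk_sum f (u :: m1) + walk_sum f (v :: m2).
Proof.
  revert u. induction m1 as [|y m1 IH]; intros u [Hw1 Hl1] W2.
  - simpl in Hl1 |- *. subst v. split; [exact W2 | lra].
  - destruct Hw1 as [Huy Hw1]. rewrite last_cons_default in Hl1.
    destruct (IH y (conj Hw1 Hl1) W2) as [[Hw Hl] Hsum].
    split; [split|].
    + split; assumption.
    + simpl app. now rewrite last_cons_default.
    + change (f u y + walk_sum f (y :: m1 ++ m2)
              = f u y + walk_sum f (y :: m1) + walk_sum f (v :: m2)).
      rewrite Hsum. lra.
Qed.

Lemma path_length_ge_via u m x : In x (u :: m) ->
  Defs.dist u x + Defs.dist x (last m u) <= path_length (u :: m).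
Proof.
  revert u x. induction m as [|y m IH]; intros u x Hx.
  - destruct Hx as [-> | []]. simpl. rewrite dist_diag. lra.
  - change (path_length (u :: y :: m)) with (Defs.dist u y + path_length (y :: m)).
    rewrite last_cons_default.
    destruct Hx as [Hux | Hx].
    + subst x. pose proof (IH y y (or_introl eq_refl)). pose proof (dist_triangle u y (last m y)).
      rewrite dist_diag in *. lra.
    + pose proof (IH y x Hx). pose proof (dist_triangle u y x). lra.
Qed.

Section AntisymmetricWalkSum.

Variable f : point -> point -> R.
Hypothesis f_antisym : forall a b, f b a = - f a b.

(* A closed walk without repeated vertices backtracks along a single edge or is a
   cycle; otherwise it splits at a repeated vertex into two shorter closed walks. *)
Lemma closed_walk_sum_acyclic E u m : ~ has_cycle E -> walk E u u m -> walk_sum f (u :: m) = 0.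
Proof.
  intros Hacyclic. revert u.
  induction m as [m IH] using (Nat.measure_induction _ (@length point)). intros u [Hw Hl].
  destruct (NoDup_decidable (fun x y : point => classic (x = y)) m) as [Hnd | Hdup].
  - destruct m as [|y [|z [|w r]]].
    + simpl. lra.
    + simpl in Hl |- *. subst y. pose proof (f_antisym u u). lra.
    + simpl in Hl |- *. subst z. pose proof (f_antisym u y). lra.
    + exfalso. apply Hacyclic. exists (y :: z :: w :: r).
      destruct Hw as [Huy Hw].
      split; [simpl; lia|]. split; [exact Hnd|]. split; [exact Hw|].
      exists y, u. split; [reflexivity|]. split; [|exact Huy].
      rewrite last_cons_default in *. exact Hl.
  - destruct (not_NoDup (fun x y : point => classic (x = y)) Hdup) as (a & A & B & C & ->).
    change (u :: A ++ a :: B ++ a :: C) with ((u :: A) ++ a :: B ++ a :: C) in *.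
    destruct (walk_ok_cut_loop E (u :: A) a B C Hw) as [Hw_outer Hw_loop].
    rewrite walk_sum_cut_loop.
    rewrite !last_app_cons in Hl. rewrite <- app_comm_cons.
    rewrite (IH (A ++ a :: C)), (IH (B ++ [a])); [lra | | | |].
    + rewrite !length_app. simpl. rewrite length_app. simpl. lia.
    + split; [exact Hw_loop | apply last_last].
    + rewrite !length_app. simpl. rewrite length_app. simpl. lia.
    + split; [exact Hw_outer|]. now rewrite last_app_cons.
Qed.

End AntisymmetricWalkSum.

(** * Crossings of the positive x-axis *)

Definition upper (x : point) : R := if Rle_dec 0 (snd x) then 1 else 0.

(* The line through a and b meets the x-axis at abscissa
   (snd a * fst b - snd b * fst a) / (snd a - snd b). *)
Definition crossing (a b : point) : R :=
  if Req_EM_T (upper a) (upper b) then 0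
  else if Rlt_dec 0 ((snd a * fst b - snd b * fst a) * (snd a - snd b))
  then upper b - upper a else 0.

Definition crossing_potential (s x : point) : R :=
  if Rlt_dec 0 (fst s) then upper x else 0.

Lemma crossing_antisym a b : crossing b a = - crossing a b.
Proof.
  unfold crossing.
  replace ((snd b * fst a - snd a * fst b) * (snd b - snd a))
    with ((snd a * fst b - snd b * fst a) * (snd a - snd b)) by ring.
  destruct (Req_EM_T (upper b) (upper a)), (Req_EM_T (upper a) (upper b)); try congruence.
  - lra.
  - destruct Rlt_dec; lra.
Qed.

(* The open half-plane {x | 0 < dot x s} meets the x-axis only in the positive
   half-axis if 0 < fst s, and only in the nonpositive one otherwise. *)
Lemma crossing_halfplane s a b : 0 < dot a s -> 0 < dot b s ->
  crossing a b = crossing_potential s b - crossing_potential s a.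
Proof.
  unfold dot, crossing, crossing_potential, upper.
  destruct a as [a1 a2], b as [b1 b2], s as [s1 s2]; simpl. intros Ha Hb.
  set (c := (a2 * b1 - b2 * a1) * (a2 - b2)).
  assert (Hid : s1 * c = (a2 - b2) * (a2 * (b1 * s1 + b2 * s2) - b2 * (a1 * s1 + a2 * s2)))
    by (unfold c; ring).
  destruct (Rle_dec 0 a2), (Rle_dec 0 b2).
  - destruct (Req_EM_T 1 1), (Rlt_dec 0 s1); lra.
  - assert (0 < a2 * (b1 * s1 + b2 * s2) - b2 * (a1 * s1 + a2 * s2)) by nra.
    assert (Hsc : 0 < s1 * c) by (rewrite Hid; nra).
    destruct (Req_EM_T 1 0), (Rlt_dec 0 c), (Rlt_dec 0 s1); nra.
  - assert (a2 * (b1 * s1 + b2 * s2) - b2 * (a1 * s1 + a2 * s2) < 0) by nra.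
    assert (Hsc : 0 < s1 * c) by (rewrite Hid; nra).
    destruct (Req_EM_T 0 1), (Rlt_dec 0 c), (Rlt_dec 0 s1); nra.
  - destruct (Req_EM_T 0 0), (Rlt_dec 0 s1); lra.
Qed.

Lemma walk_sum_crossing_halfplane s u m : (forall x, In x (u :: m) -> 0 < dot x s) ->
  walk_sum crossing (u :: m) = crossing_potential s (last m u) - crossing_potential s u.
Proof.
  revert u. induction m as [|y m IH]; intros u Hin.
  - simpl. lra.
  - change (walk_sum crossing (u :: y :: m)) with (crossing u y + walk_sum crossing (y :: m)).
    rewrite last_cons_default, IH by (intros x Hx; apply Hin; right; exact Hx).
    rewrite (crossing_halfplane s) by (apply Hin; simpl; auto). lra.
Qed.

Lemma wsum_repeat_0 (S : list point) m : wsum (repeat 0 m) S = (0, 0).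
Proof.
  revert m. induction S as [|p S IH]; intros [|m]; simpl; auto.
  rewrite IH. simpl. f_equal; ring.
Qed.

Lemma sum_list_repeat_0 m : sum_list (repeat 0 m) = 0.
Proof. induction m as [|m IH]; simpl; [reflexivity|]. rewrite IH. ring. Qed.

Lemma in_hull_of_In S p : In p S -> in_hull S p.
Proof.
  induction S as [|q S IH]; intros Hp; [destruct Hp|].
  destruct Hp as [-> | Hp].
  - exists (1 :: repeat 0 (length S)). split; [simpl; now rewrite repeat_length|].
    split; [constructor; [lra | apply Forall_forall; intros w Hw; apply repeat_spec in Hw; lra]|].
    split; [simpl; rewrite sum_list_repeat_0; ring|].
    simpl. rewrite wsum_repeat_0. destruct p; simpl; f_equal; ring.
  - destruct (IH Hp) as (ws & Hlen & Hpos & Hsum & ->).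
    exists (0 :: ws). split; [simpl; auto|]. split; [constructor; auto; lra|].
    split; [simpl; lra|]. simpl. destruct (wsum ws S); simpl. f_equal; ring.
Qed.

Lemma dot_wsum_le u S ws : length ws = length S -> Forall (fun w => 0 <= w) ws ->
  (forall q, In q S -> dot q u <= 1) -> dot (wsum ws S) u <= sum_list ws.
Proof.
  revert ws. induction S as [|q S IH]; intros [|w ws] Hlen Hpos Hle; try discriminate.
  - unfold dot. simpl. lra.
  - inversion Hpos as [|? ? Hw Hws]; subst.
    pose proof (IH ws ltac:(simpl in Hlen; lia) Hws (fun q' Hq' => Hle q' (or_intror Hq'))).
    pose proof (Hle q (or_introl eq_refl)).
    unfold dot in *. simpl. destruct (wsum ws S) as [x y]. simpl in *. nra.
Qed.

Lemma not_in_hull_interior S p : (forall q, In q S -> dot q p <= 1) -> dot p p = 1 ->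
  ~ in_hull_interior S p.
Proof.
  intros Hle Hp [eps [Heps Hball]].
  set (q := ((1 + eps / 2) * fst p, (1 + eps / 2) * snd p)).
  assert (Hq : Defs.dist p q < eps).
  { unfold Defs.dist, q. cbn [fst snd].
    replace ((fst p - (1 + eps / 2) * fst p) ^ 2 + (snd p - (1 + eps / 2) * snd p) ^ 2)
      with ((eps / 2) ^ 2 * dot p p) by (unfold dot; ring).
    rewrite Hp, Rmult_1_r, sqrt_pow2; lra. }
  destruct (Hball q Hq) as (ws & Hlen & Hpos & Hsum & Hws).
  pose proof (dot_wsum_le p S ws Hlen Hpos Hle) as Hdot.
  rewrite <- Hws, Hsum in Hdot. unfold dot, q in Hdot, Hp. simpl in Hdot. nra.
Qed.

Lemma dot_le_1_of_unit p q : dot p p = 1 -> dot q q = 1 -> dot q p <= 1.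
Proof.
  unfold dot. intros Hp Hq.
  pose proof (pow2_ge_0 (fst p - fst q)). pose proof (pow2_ge_0 (snd p - snd q)). nra.
Qed.

Lemma convex_position_of_unit S : (forall p, In p S -> dot p p = 1) -> convex_position S.
Proof.
  intros Hunit p Hp. split; [now apply in_hull_of_In|].
  apply not_in_hull_interior; [|now apply Hunit].
  intros q Hq. apply dot_le_1_of_unit; auto.
Qed.

(** * The regular n-gon *)

Definition ngon_angle (n : nat) : R := 2 * PI / INR n.

Definition ngon_vertex (n k : nat) : point :=
  (cos (INR k * ngon_angle n), sin (INR k * ngon_angle n)).

Definition ngon (n : nat) : list point := map (ngon_vertex n) (seq 0 n).

Lemma ngon_angle_n n : (1 <= n)%nat -> INR n * ngon_angle n = 2 * PI.
Proof.
  intros Hn. unfold ngon_angle. pose proof (le_INR 1 n Hn) as Hn1. simpl in Hn1. field. lra.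
Qed.

Lemma ngon_angle_pos n : (1 <= n)%nat -> 0 < ngon_angle n.
Proof.
  intros Hn. unfold ngon_angle. pose proof (le_INR 1 n Hn) as Hn1. simpl in Hn1.
  pose proof PI_RGT_0. apply Rdiv_lt_0_compat; lra.
Qed.

Lemma ngon_angle_le_PI n : (2 <= n)%nat -> ngon_angle n <= PI.
Proof.
  intros Hn. pose proof (ngon_angle_n n ltac:(lia)). pose proof (ngon_angle_pos n ltac:(lia)).
  pose proof (le_INR 2 n Hn). simpl in *. nra.
Qed.

Lemma ngon_angle_lt_PI n : (3 <= n)%nat -> ngon_angle n < PI.
Proof.
  intros Hn. pose proof (ngon_angle_n n ltac:(lia)). pose proof (ngon_angle_pos n ltac:(lia)).
  pose proof (le_INR 3 n Hn). simpl in *. nra.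
Qed.

Lemma sin_PI_div_pos n : (2 <= n)%nat -> 0 < sin (PI / INR n).
Proof.
  intros Hn. pose proof (ngon_angle_pos n ltac:(lia)). pose proof (ngon_angle_le_PI n Hn).
  unfold ngon_angle in *. apply sin_gt_0; lra.
Qed.

Lemma ngon_vertex_unit n k : dot (ngon_vertex n k) (ngon_vertex n k) = 1.
Proof.
  unfold dot, ngon_vertex. simpl. rewrite <- (sin2_cos2 (INR k * ngon_angle n)). unfold Rsqr. ring.
Qed.

Lemma ngon_vertex_n n : (1 <= n)%nat -> ngon_vertex n n = ngon_vertex n 0.
Proof.
  intros Hn. unfold ngon_vertex. rewrite ngon_angle_n by exact Hn.
  simpl INR. now rewrite Rmult_0_l, cos_2PI, sin_2PI, cos_0, sin_0.
Qed.

Lemma ngon_vertex_S n k : ngon_vertex n (S k) =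
  (cos (INR k * ngon_angle n + ngon_angle n), sin (INR k * ngon_angle n + ngon_angle n)).
Proof. unfold ngon_vertex. now rewrite S_INR, Rmult_plus_distr_r, Rmult_1_l. Qed.

Lemma dist_on_unit_circle a b :
  Defs.dist (cos a, sin a) (cos b, sin b) = 2 * Rabs (sin ((a - b) / 2)).
Proof.
  unfold Defs.dist; simpl. rewrite form2, form4.
  transitivity (sqrt (Rsqr (2 * sin ((a - b) / 2)) *
                      (Rsqr (sin ((a + b) / 2)) + Rsqr (cos ((a + b) / 2))))).
  - f_equal. unfold Rsqr. ring.
  - rewrite sin2_cos2, Rmult_1_r, sqrt_Rsqr_abs, Rabs_mult, (Rabs_pos_eq 2); lra.
Qed.

Lemma ngon_side_length n k : (2 <= n)%nat ->
  Defs.dist (ngon_vertex n k) (ngon_vertex n (S k)) = 2 * sin (PI / INR n).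
Proof.
  intros Hn. rewrite ngon_vertex_S. unfold ngon_vertex. rewrite dist_on_unit_circle.
  pose proof (le_INR 2 n Hn) as Hn2. simpl in Hn2.
  replace ((INR k * ngon_angle n - (INR k * ngon_angle n + ngon_angle n)) / 2)
    with (- (PI / INR n)) by (unfold ngon_angle; field; lra).
  rewrite sin_neg, Rabs_Ropp, Rabs_pos_eq; [reflexivity|].
  left. now apply sin_PI_div_pos.
Qed.

Lemma ngon_arc_potential_eq n k : (3 <= n)%nat -> (k + 2 <= n)%nat ->
  let s := vadd (ngon_vertex n k) (ngon_vertex n (S k)) in
  crossing_potential s (ngon_vertex n (S k)) = crossing_potential s (ngon_vertex n k).
Proof.
  intros Hn Hk s. unfold s, crossing_potential.
  destruct Rlt_dec as [Hs|]; [|reflexivity].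
  rewrite ngon_vertex_S in *. unfold vadd, upper, ngon_vertex in *. simpl in *.
  pose proof (ngon_angle_pos n ltac:(lia)) as Hh0. pose proof (ngon_angle_lt_PI n Hn) as HhPI.
  pose proof PI_RGT_0.
  assert (Hend : INR k * ngon_angle n + 2 * ngon_angle n <= 2 * PI).
  { rewrite <- (ngon_angle_n n) by lia. pose proof (le_INR (k + 2) n Hk) as Hk2.
    rewrite plus_INR in Hk2. simpl in Hk2. nra. }
  assert (Ha0 : 0 <= INR k * ngon_angle n) by (pose proof (pos_INR k); nra).
  set (h := ngon_angle n) in *. set (a := INR k * h) in *.
  rewrite form1 in Hs.
  replace ((a - (a + h)) / 2) with (- (h / 2)) in Hs by field.
  replace ((a + (a + h)) / 2) with (a + h / 2) in Hs by field.
  rewrite cos_neg in Hs.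
  assert (0 < cos (h / 2)) by (apply cos_gt_0; lra).
  assert (Hmid : 0 < cos (a + h / 2)) by nra.
  destruct (Rlt_or_le (a + h / 2) (PI / 2)) as [Hlow | Hhigh].
  - assert (0 <= sin a) by (apply sin_ge_0; lra).
    assert (0 <= sin (a + h)) by (apply sin_ge_0; lra).
    destruct (Rle_dec 0 (sin (a + h))), (Rle_dec 0 (sin a)); lra.
  - assert (3 * (PI / 2) < a + h / 2).
    { destruct (Rlt_or_le (3 * (PI / 2)) (a + h / 2)) as [|Hle]; [assumption|].
      pose proof (cos_le_0 (a + h / 2) Hhigh Hle). lra. }
    assert (sin a < 0) by (apply sin_lt_0; lra).
    assert (sin (a + h) < 0) by (apply sin_lt_0; lra).
    destruct (Rle_dec 0 (sin (a + h))), (Rle_dec 0 (sin a)); lra.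
Qed.

Lemma ngon_last_arc_potential k : (2 <= k)%nat ->
  let s := vadd (ngon_vertex (S k) k) (ngon_vertex (S k) (S k)) in
  crossing_potential s (ngon_vertex (S k) (S k)) - crossing_potential s (ngon_vertex (S k) k) = 1.
Proof.
  intros Hk s. unfold s. rewrite ngon_vertex_n by lia.
  pose proof (ngon_angle_pos (S k) ltac:(lia)). pose proof (ngon_angle_lt_PI (S k) ltac:(lia)).
  assert (Hlast : INR k * ngon_angle (S k) = 2 * PI - ngon_angle (S k)).
  { rewrite <- (ngon_angle_n (S k)) by lia. rewrite S_INR. ring. }
  unfold crossing_potential, vadd, upper, ngon_vertex. rewrite Hlast. simpl.
  set (h := ngon_angle (S k)) in *.
  rewrite Rmult_0_l, cos_0, sin_0, cos_minus, sin_minus, cos_2PI, sin_2PI.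
  assert (0 < sin h) by (apply sin_gt_0; lra).
  assert (-1 < cos h) by (rewrite <- cos_PI; apply cos_decreasing_1; lra).
  destruct (Rlt_dec 0 (1 * cos h + 0 * sin h + 1)); [|lra].
  destruct (Rle_dec 0 0), (Rle_dec 0 (0 * cos h - 1 * sin h)); lra.
Qed.

Lemma ngon_vertex_inj n j k : (j < k < n)%nat -> ngon_vertex n j <> ngon_vertex n k.
Proof.
  intros Hjk Heq.
  pose proof (dist_diag (ngon_vertex n j)) as Hdist. rewrite Heq in Hdist at 2.
  unfold ngon_vertex in Hdist. rewrite dist_on_unit_circle in Hdist.
  pose proof (ngon_angle_pos n ltac:(lia)). pose proof (ngon_angle_n n ltac:(lia)).
  assert (INR j + 1 <= INR k) by (rewrite <- S_INR; apply le_INR; lia).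
  assert (INR k + 1 <= INR n) by (rewrite <- S_INR; apply le_INR; lia).
  pose proof (pos_INR j).
  assert (0 < sin ((INR k - INR j) * ngon_angle n / 2)) by (apply sin_gt_0; nra).
  replace ((INR j * ngon_angle n - INR k * ngon_angle n) / 2)
    with (- ((INR k - INR j) * ngon_angle n / 2)) in Hdist by field.
  rewrite sin_neg, Rabs_Ropp, Rabs_pos_eq in Hdist; lra.
Qed.

Lemma ngon_NoDup n : NoDup (ngon n).
Proof.
  apply NoDup_map_NoDup_ForallPairs; [|apply seq_NoDup].
  intros j k Hj Hk Heq. apply in_seq in Hj, Hk.
  destruct (Nat.lt_trichotomy j k) as [Hlt | [Heq' | Hlt]]; [| assumption |].
  - exfalso. apply (ngon_vertex_inj n j k); [lia | exact Heq].
  - exfalso. apply (ngon_vertex_inj n k j); [lia | now symmetry].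
Qed.

Lemma ngon_vertex_In n k : (1 <= n)%nat -> (k <= n)%nat -> In (ngon_vertex n k) (ngon n).
Proof.
  intros Hn Hk. unfold ngon. destruct (Nat.eq_dec k n) as [-> | Hne].
  - rewrite ngon_vertex_n by exact Hn. apply in_map, in_seq. lia.
  - apply in_map, in_seq. lia.
Qed.

Lemma inv_sin_PI_div_gt n : (2 <= n)%nat -> 1 / sin (PI / INR n) > INR n / PI.
Proof.
  intros Hn. pose proof (sin_PI_div_pos n Hn). pose proof (le_INR 2 n Hn) as Hn2. simpl in Hn2.
  pose proof PI_RGT_0.
  assert (sin (PI / INR n) < PI / INR n) by (apply sin_lt_x, Rdiv_lt_0_compat; lra).
  replace (INR n / PI) with (1 / (PI / INR n)) by (field; lra).
  unfold Rdiv. rewrite !Rmult_1_l. apply Rinv_lt_contravar; nra.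
Qed.

Lemma short_walk_in_halfplane u v m : dot u u = 1 -> dot v v = 1 -> last m u = v ->
  path_length (u :: m) < 2 -> forall x, In x (u :: m) -> 0 < dot x (vadd u v).
Proof.
  intros Hu Hv Hlast Hshort x Hx.
  pose proof (path_length_ge_via u m x Hx) as Hvia. rewrite Hlast, (dist_comm u x) in Hvia.
  pose proof (one_sub_dot_le_dist x u Hu). pose proof (one_sub_dot_le_dist x v Hv).
  unfold dot, vadd in *. simpl. lra.
Qed.

Definition halfplane_arc E (u v : point) (m : list point) : Prop :=
  walk E u v m /\ forall x, In x (u :: m) -> 0 < dot x (vadd u v).

Lemma ngon_halfplane_arcs_cycle n E : (3 <= n)%nat ->
  (forall k, (k < n)%nat -> exists m, halfplane_arc E (ngon_vertex n k) (ngon_vertex n (S k)) m) ->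
  has_cycle E.
Proof.
  intros Hn Harc. apply NNPP. intros Hacyclic.
  destruct n as [|n]; [lia|].
  assert (Hreach : forall k, (k <= n)%nat ->
    exists m, walk E (ngon_vertex (S n) 0) (ngon_vertex (S n) k) m /\
              walk_sum crossing (ngon_vertex (S n) 0 :: m) = 0).
  { induction k as [|k IH]; intros Hk.
    - exists []. split; [split; simpl; auto | reflexivity].
    - destruct (IH ltac:(lia)) as (m & Hwalk & Hsum).
      destruct (Harc k ltac:(lia)) as (m' & Hwalk' & Hin).
      destruct (walk_cat crossing E _ _ _ _ _ Hwalk Hwalk') as [Hcat Hcat_sum].
      exists (m ++ m'). split; [exact Hcat|].
      rewrite Hcat_sum, Hsum, (walk_sum_crossing_halfplane _ _ _ Hin), (proj2 Hwalk').
      rewrite ngon_arc_potential_eq by lia. ring. }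
  destruct (Hreach n (le_n n)) as (m & Hwalk & Hsum).
  destruct (Harc n (Nat.lt_succ_diag_r n)) as (m' & Hwalk' & Hin).
  destruct (walk_cat crossing E _ _ _ _ _ Hwalk Hwalk') as [Hclosed Hclosed_sum].
  rewrite ngon_vertex_n in Hclosed by lia.
  rewrite (closed_walk_sum_acyclic crossing crossing_antisym E _ _ Hacyclic Hclosed), Hsum,
    (walk_sum_crossing_halfplane _ _ _ Hin), (proj2 Hwalk'), ngon_last_arc_potential in Hclosed_sum
    by lia.
  lra.
Qed.

Lemma ngon_tree_arc n V E k : (2 <= n)%nat -> (k < n)%nat -> steiner_tree (ngon n) V E ->
  ~ dilation_at_least (ngon n) E (1 / sin (PI / INR n)) ->
  exists m, halfplane_arc E (ngon_vertex n k) (ngon_vertex n (S k)) m.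
Proof.
  intros Hn Hk [[_ [_ [Hconn _]]] Hincl] Hsmall.
  assert (Hu : In (ngon_vertex n k) (ngon n)) by (apply ngon_vertex_In; lia).
  assert (Hv : In (ngon_vertex n (S k)) (ngon n)) by (apply ngon_vertex_In; lia).
  destruct (Hconn _ _ (Hincl _ Hu) (Hincl _ Hv)) as [p Hpath].
  destruct (simple_path_walk _ _ _ _ Hpath) as (m & -> & Hwalk).
  exists m. split; [exact Hwalk|].
  apply short_walk_in_halfplane; [apply ngon_vertex_unit | apply ngon_vertex_unit | apply Hwalk |].
  pose proof (ngon_side_length n k Hn) as Hside. pose proof (sin_PI_div_pos n Hn).
  apply Rnot_le_lt. intros Hlong. apply Hsmall.
  exists (ngon_vertex n k), (ngon_vertex n (S k)).
  split; [exact Hu|]. split; [exact Hv|]. split.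
  - intros Heq. rewrite Heq, dist_diag in Hside. lra.
  - exists (ngon_vertex n k :: m). split; [exact Hpath|].
    rewrite Hside.
    replace (1 / sin (PI / INR n)) with (2 / (2 * sin (PI / INR n))) by (field; lra).
    apply Rle_ge, Rmult_le_compat_r; [left; apply Rinv_0_lt_compat; lra | exact Hlong].
Qed.

Lemma ngon_convex_position n : convex_position (ngon n).
Proof.
  apply convex_position_of_unit. intros p Hp.
  apply in_map_iff in Hp as (k & <- & _). apply ngon_vertex_unit.
Qed.

Lemma ngon_steiner_dilation n V E : (2 <= n)%nat -> steiner_tree (ngon n) V E ->
  dilation_at_least (ngon n) E (1 / sin (PI / INR n)).
Proof.
  intros Hn Htree. apply NNPP. intros Hsmall.
  destruct (Nat.eq_dec n 2) as [-> | Hn2].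
  - destruct (ngon_tree_arc 2 V E 0 Hn ltac:(lia) Htree Hsmall) as (m & _ & Hin).
    specialize (Hin _ (or_introl eq_refl)).
    (* The two vertices are antipodal, so the half-plane is empty. *)
    rewrite ngon_vertex_S in Hin. unfold dot, vadd, ngon_vertex in Hin. simpl in Hin.
    replace (ngon_angle 2) with PI in Hin by (unfold ngon_angle; simpl; field).
    rewrite cos_plus, sin_plus, cos_PI, sin_PI in Hin. lra.
  - pose proof Htree as [[_ [_ [_ Hacyclic]]] _].
    apply Hacyclic, (ngon_halfplane_arcs_cycle n); [lia|].
    intros k Hk. exact (ngon_tree_arc n V E k Hn Hk Htree Hsmall).
Qed.

Theorem theorem1 :
  forall n : nat, (1 < n)%nat ->
    exists S : list point,
      length S = n /\ NoDup S /\ convex_position S /\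
      (forall (V : list point) (E : list (point * point)),
          steiner_tree S V E ->
          dilation_at_least S E (1 / sin (PI / INR n))) /\
      1 / sin (PI / INR n) > INR n / PI.
Proof.
  intros n Hn. exists (ngon n).
  split; [unfold ngon; now rewrite length_map, length_seq|].
  split; [apply ngon_NoDup|].
  split; [apply ngon_convex_position|].
  split.
  - intros V E Htree. exact (ngon_steiner_dilation n V E Hn Htree).
  - apply inv_sin_PI_div_gt. exact Hn.
Qed.
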